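(* Let $K$ be a discrete hypergroup, let $\mu$ be the left Haar measure on $K$ given by $\mu(\{x\})=\dfrac{1}{(\delta_x*\delta_{x^-})(\{e\})}$ for $x\in K$, and let $p\geq1$. Then for each $g\in L^p(K,\mu)$, the set $$\big\{f\in L^p(K,\mu):\ |f|\geq|g|\big\}$$ is not $\sigma$-porous in $L^p(K,\mu)$.
   Context: A locally compact hypergroup is a locally compact Hausdorff space $K$ together with a bilinear, positive-continuous map $(\mu,\nu)\mapsto\mu*\nu$ on the space $\mathbb M(K)$ of regular complex Borel measures and an involutive homeomorphism $x\mapsto x^-$ of $K$ such that: (i) $(\mathbb M(K),* )$ is a complex associative algebra; (ii) for $x,y\in K$, $\delta_x*\delta_y$ is a probability measure with compact support ($\delta_x$ = Dirac measure); (iii) $(x,y)\mapsto\operatorname{supp}(\delta_x*\delta_y)$ is continuous into the nonempty compact subsets of $K$ with the Michael topology; (iv) there is $e\in K$ with $\delta_x*\delta_e=\delta_e*\delta_x=\delta_x$ for all $x$; (v) $e\in\operatorname{supp}(\delta_x*\delta_y)$ iff $x=y^-$. $K$ is discrete if its topology is discrete. Porosity: Let $X$ be a metric space and $0<\lambda<1$. A set $E\subseteq X$ is $\lambda$-porous at $x\in E$ if for each $\delta>0$ there is $y\in B(x;\delta)\setminus\{x\}$ with $B(y;\lambda\, d(x,y))\cap E=\varnothing$; $E$ is $\lambda$-porous if it is $\lambda$-porous at each of its points; $E$ is $\sigma$-$\lambda$-porous if it is a countable union of $\lambda$-porous subsets of $X$. A set is called $\sigma$-porous if it is $\sigma$-$\lambda$-porous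 for some $\lambda\in(0,1)$; ''not $\sigma$-porous'' means not $\sigma$-$\lambda$-porous for any $\lambda\in(0,1)$. *)

From Stdlib Require Import Reals List Classical.
From Coquelicot Require Import Coquelicot.
Open Scope R_scope.

Definition lsum {K : Type} (f : K -> R) (s : list K) : R :=
  fold_right (fun x acc => f x + acc) 0 s.

Definition has_fsum {K : Type} (f : K -> R) (v : R) : Prop :=
  exists s : list K, NoDup s /\ (forall z, f z <> 0 -> In z s) /\ lsum f s = v.

(** On a discrete space, a regular complex Borel measure
    is an l^1 function, and the convolution is determined (by bilinearity and
    continuity) by the point-mass convolutions delta_x * delta_y, which are
    compactly (= finitely) supported probability measures; [conv x y z] is the
    mass of delta_x * delta_y at z. *)
Record DiscreteHypergroup (K : Type) := {
  conv : K -> K -> K -> R;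
  hinv : K -> K;
  hid : K;
  conv_ge0 : forall x y z, 0 <= conv x y z;
  conv_prob : forall x y, has_fsum (conv x y) 1;
  (* (i): associativity of the convolution algebra (on point masses) *)
  conv_assoc : forall x y z w, exists v,
      has_fsum (fun u => conv x y u * conv u z w) v /\
      has_fsum (fun u => conv y z u * conv x u w) v;
  conv_id_r : forall x, conv x hid x = 1 /\ (forall z, z <> x -> conv x hid z = 0);
  conv_id_l : forall x, conv hid x x = 1 /\ (forall z, z <> x -> conv hid x z = 0);
  hinv_invol : forall x, hinv (hinv x) = x;
  conv_e_supp : forall x y, conv x y hid <> 0 <-> x = hinv y
}.
Arguments conv {K} _ _ _ _.
Arguments hinv {K} _ _.
Arguments hid {K} _.

Definition haar {K : Type} (H : DiscreteHypergroup K) (x : K) : R :=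
  / conv H x (hinv H x) (hid H).

Definition rpow (a p : R) : R :=
  if Req_EM_T a 0 then 0 else Rpower a p.

Definition lp_partial {K : Type} (mu : K -> R) (p : R) (f : K -> C) (r : R) : Prop :=
  exists s : list K, NoDup s /\ r = lsum (fun x => rpow (Cmod (f x)) p * mu x) s.

Definition in_Lp {K : Type} (mu : K -> R) (p : R) (f : K -> C) : Prop :=
  exists M : R, forall r, lp_partial mu p f r -> r <= M.

Definition lp_sum {K : Type} (mu : K -> R) (p : R) (f : K -> C) : R :=
  real (Lub_Rbar (lp_partial mu p f)).

Definition lp_norm {K : Type} (mu : K -> R) (p : R) (f : K -> C) : R :=
  rpow (lp_sum mu p f) (/ p).

Definition lp_dist {K : Type} (mu : K -> R) (p : R) (f g : K -> C) : R :=
  lp_norm mu p (fun x => Cminus (f x) (g x)).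

Section Porosity.
Context {A : Type} (X : A -> Prop) (d : A -> A -> R).

Definition porous_at (lam : R) (E : A -> Prop) (x : A) : Prop :=
  forall delta, 0 < delta ->
    exists y, X y /\ y <> x /\ d x y < delta /\
      (forall z, X z -> d y z < lam * d x y -> ~ E z).

Definition porous (lam : R) (E : A -> Prop) : Prop :=
  (forall x, E x -> X x) /\ (forall x, E x -> porous_at lam E x).

Definition sigma_porous (lam : R) (E : A -> Prop) : Prop :=
  exists En : nat -> A -> Prop,
    (forall n, porous lam (En n)) /\
    (forall x, E x <-> exists n, En n x).
End Porosity.

(* Write D(f, g) = ||f - g||_p^p and Q = 2^p, so that D(f, h) <= Q (D(f, g) + D(g, h)); since
   the Haar weights are >= 1, D also bounds every coordinate |f x - g x|^p.  If the set of
   functions dominating |g| were the union of lam-porous sets E_n, we could build closed D-balls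
   B(c_n, r_n), nested with r_n -> 0, and lower bounds h_n <= |c_n| increasing with h_0 = |g|,
   such that no f with |f| >= h_(n+1) and D(c_(n+1), f) <= Q r_(n+1) lies in E_n.  The centres
   converge pointwise to a function dominating g that lies within Q r_(n+1) of c_(n+1) for all n,
   hence in no E_n: a contradiction.

   To refine a stage (h, c, r), first inflate c to c' with |c'| = |c| + W, where W is tiny on a
   large finite set and equals h / kap elsewhere; c' stays close to c because the tail of c is
   small.  If no point of E_n dominating h + W lies near c', a ball around c' with lower bound
   h + W will do.  Otherwise porosity at such a point a yields a hole B(y, lam d(a, y)) close to
   a, and the margin W makes raising |y| up to h cost at most kap^p D(a, y), so a small ball
   around the raised point lies inside the hole. *)

From Stdlib Require Import Reals List Lra Classical ClassicalEpsilon FunctionalExtensionality.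
From Coquelicot Require Import Coquelicot.
Open Scope R_scope.

Lemma rpow_0_l q : rpow 0 q = 0.
Proof. unfold rpow; destruct (Req_EM_T 0 0); [reflexivity | congruence]. Qed.

Lemma rpow_gt0 a q : 0 < a -> 0 < rpow a q.
Proof. intros Ha; unfold rpow; destruct (Req_EM_T a 0); [lra | apply exp_pos]. Qed.

Lemma rpow_ge0 a q : 0 <= rpow a q.
Proof. unfold rpow; destruct (Req_EM_T a 0); [lra | left; apply exp_pos]. Qed.

Lemma rpow_1_l q : rpow 1 q = 1.
Proof.
  unfold rpow; destruct (Req_EM_T 1 0); [lra |].
  unfold Rpower; rewrite ln_1, Rmult_0_r; apply exp_0.
Qed.

Lemma rpow_lt_compat a b q : 0 < q -> 0 <= a < b -> rpow a q < rpow b q.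
Proof.
  intros Hq [Ha Hab]; unfold rpow.
  destruct (Req_EM_T b 0); [lra |].
  destruct (Req_EM_T a 0); [apply exp_pos | apply Rlt_Rpower_l; lra].
Qed.

Lemma rpow_le_compat a b q : 0 < q -> 0 <= a <= b -> rpow a q <= rpow b q.
Proof.
  intros Hq [Ha [Hab | <-]]; [left; apply rpow_lt_compat; lra | lra].
Qed.

Lemma rpow_lt_reg a b q : 0 < q -> 0 <= a -> 0 <= b -> rpow a q < rpow b q -> a < b.
Proof.
  intros Hq Ha Hb H; destruct (Rlt_le_dec a b) as [|Hba]; [assumption |].
  pose proof (rpow_le_compat b a q Hq (conj Hb Hba)); lra.
Qed.

Lemma rpow_mult_distr a b q : 0 <= a -> 0 <= b -> rpow (a * b) q = rpow a q * rpow b q.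
Proof.
  intros Ha Hb; unfold rpow.
  destruct (Req_EM_T a 0) as [-> | Ha0]; [rewrite Rmult_0_l; destruct (Req_EM_T 0 0); lra |].
  destruct (Req_EM_T b 0) as [-> | Hb0]; [rewrite Rmult_0_r; destruct (Req_EM_T 0 0); lra |].
  destruct (Req_EM_T (a * b) 0) as [Hab | _]; [apply Rmult_integral in Hab; tauto |].
  symmetry; apply Rpower_mult_distr; lra.
Qed.

Lemma rpow_inv_base a q : 0 < a -> rpow (/ a) q = / rpow a q.
Proof.
  intros Ha; pose proof (rpow_gt0 a q Ha); pose proof (Rinv_0_lt_compat a Ha).
  assert (Hprod : rpow (/ a) q * rpow a q = 1)
    by (rewrite <- rpow_mult_distr, Rinv_l by lra; apply rpow_1_l).
  apply (Rmult_eq_reg_r (rpow a q)); [rewrite Hprod, Rinv_l |]; lra.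
Qed.

Lemma rpow_rpow_inv a q : 0 < q -> 0 <= a -> rpow (rpow a q) (/ q) = a.
Proof.
  intros Hq Ha; unfold rpow at 2.
  destruct (Req_EM_T a 0) as [-> | Ha0]; [apply rpow_0_l |].
  unfold rpow; destruct (Req_EM_T (Rpower a q) 0) as [E | _].
  - unfold Rpower in E; pose proof (exp_pos (q * ln a)); lra.
  - rewrite Rpower_mult, Rinv_r by lra; apply Rpower_1; lra.
Qed.

Lemma rpow_inv_rpow a q : 0 < q -> 0 <= a -> rpow (rpow a (/ q)) q = a.
Proof.
  intros Hq Ha; rewrite <- (Rinv_inv q) at 2.
  apply rpow_rpow_inv; [apply Rinv_0_lt_compat |]; assumption.
Qed.

Lemma rpow_le_self e q : 1 <= q -> 0 <= e <= 1 -> rpow e q <= e.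
Proof.
  intros Hq [He0 He1]; unfold rpow.
  destruct (Req_EM_T e 0); [lra |].
  assert (Hln : ln e <= 0).
  { destruct He1 as [He1 | ->]; [| rewrite ln_1; lra].
    rewrite <- ln_1; left; apply ln_increasing; lra. }
  unfold Rpower; rewrite <- (exp_ln e) at 2 by lra.
  assert (Hexp : q * ln e <= ln e) by nra.
  destruct Hexp as [Hexp | ->]; [left; apply exp_increasing |]; lra.
Qed.

Lemma rpow_add_le a b p : 1 <= p -> 0 <= a -> 0 <= b ->
  rpow (a + b) p <= rpow 2 p * (rpow a p + rpow b p).
Proof.
  intros Hp Ha Hb.
  assert (Hmax : rpow (Rmax a b) p <= rpow a p + rpow b p).
  { pose proof (rpow_ge0 a p); pose proof (rpow_ge0 b p).
    unfold Rmax; destruct (Rle_dec a b); lra. }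
  assert (Hmax0 : 0 <= Rmax a b) by (apply (Rle_trans _ a); [| apply Rmax_l]; lra).
  apply (Rle_trans _ (rpow (2 * Rmax a b) p)).
  - apply rpow_le_compat; [lra |].
    pose proof (Rmax_l a b); pose proof (Rmax_r a b); lra.
  - rewrite rpow_mult_distr by lra.
    apply Rmult_le_compat_l; [apply rpow_ge0 | assumption].
Qed.

Lemma rpow_2_ge1 p : 1 <= p -> 1 <= rpow 2 p.
Proof.
  intros Hp; rewrite <- (rpow_1_l p).
  apply rpow_le_compat; lra.
Qed.

Section ListSums.
Context {K : Type}.
Implicit Types (f g : K -> R) (s t : list K).

Lemma lsum_le f g s : (forall x, In x s -> f x <= g x) -> lsum f s <= lsum g s.
Proof.
  induction s as [| a s IH]; simpl; intros Hfg; [lra |].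
  pose proof (Hfg a (or_introl eq_refl)).
  pose proof (IH (fun x Hx => Hfg x (or_intror Hx))); lra.
Qed.

Lemma lsum_ge0 f s : (forall x, 0 <= f x) -> 0 <= lsum f s.
Proof. intros Hf; induction s as [| a s IH]; simpl; [lra | pose proof (Hf a); lra]. Qed.

Lemma lsum_plus f g s : lsum (fun x => f x + g x) s = lsum f s + lsum g s.
Proof. induction s as [| a s IH]; simpl; [lra | rewrite IH; ring]. Qed.

Lemma lsum_scal f c s : lsum (fun x => c * f x) s = c * lsum f s.
Proof. induction s as [| a s IH]; simpl; [ring | rewrite IH; ring]. Qed.

Lemma lsum_app f s t : lsum f (s ++ t) = lsum f s + lsum f t.
Proof. induction s as [| a s IH]; simpl; [ring | rewrite IH; ring]. Qed.

Lemma lsum_filter f (b : K -> bool) s :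
  lsum (fun x => if b x then f x else 0) s = lsum f (filter b s).
Proof. induction s as [| a s IH]; simpl; [| destruct (b a); simpl]; lra. Qed.

Lemma lsum_le_incl f s t : (forall x, 0 <= f x) -> NoDup s ->
  (forall x, In x s -> In x t) -> lsum f s <= lsum f t.
Proof.
  intros Hf Hs; revert t; induction Hs as [| a s Has Hs IH]; intros t Hst.
  - apply lsum_ge0; assumption.
  - destruct (in_split a t (Hst a (or_introl eq_refl))) as [t1 [t2 ->]].
    assert (Hrem : lsum f s <= lsum f (t1 ++ t2)).
    { apply IH; intros x Hx.
      destruct (in_app_or _ _ _ (Hst x (or_intror Hx))) as [Hx' | [-> | Hx']];
        [apply in_or_app; auto | contradiction | apply in_or_app; auto]. }
    rewrite lsum_app in Hrem |- *; simpl; lra.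
Qed.

End ListSums.

Definition inb {K : Type} (s : list K) (x : K) : bool :=
  if excluded_middle_informative (In x s) then true else false.

Lemma inb_true {K : Type} (s : list K) x : inb s x = true <-> In x s.
Proof.
  unfold inb; destruct (excluded_middle_informative (In x s)); split; congruence || tauto.
Qed.

Lemma lsum_inb_le {K : Type} (f : K -> R) s t : (forall x, 0 <= f x) -> NoDup t ->
  lsum (fun x => if inb s x then f x else 0) t <= lsum f s.
Proof.
  intros Hf Ht; rewrite lsum_filter.
  apply lsum_le_incl; [assumption | apply NoDup_filter; assumption |].
  intros x Hx; apply filter_In in Hx; apply inb_true; tauto.
Qed.

Lemma lsum_notinb_app {K : Type} (f : K -> R) s t : NoDup s -> NoDup t ->
  exists u, NoDup u /\ lsum (fun x => if inb s x then 0 else f x) t + lsum f s = lsum f u.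
Proof.
  intros Hs Ht; exists (filter (fun x => negb (inb s x)) t ++ s); split.
  - apply NoDup_app; [apply NoDup_filter; assumption | assumption |].
    intros x Hx Hxs; apply filter_In in Hx.
    apply inb_true in Hxs; rewrite Hxs in Hx; destruct Hx as [_ Hx]; discriminate.
  - rewrite lsum_app, <- lsum_filter; f_equal.
    clear Ht; induction t as [| a t IH]; simpl; [reflexivity |].
    rewrite IH; destruct (inb s a); simpl; ring.
Qed.

Lemma eventually_forall_in {K : Type} (P : K -> nat -> Prop) (s : list K) :
  (forall x, In x s -> eventually (P x)) -> eventually (fun n => forall x, In x s -> P x n).
Proof.
  induction s as [| a s IH]; intros Hs.
  - exists 0%nat; simpl; tauto.
  - apply (filter_imp (fun n => P a n /\ forall x, In x s -> P x n)).
    + intros n [Ha Hs'] x [<- | Hx]; auto.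
    + apply filter_and; [apply Hs; left; reflexivity | apply IH; intros x Hx; apply Hs; right; assumption].
Qed.

Lemma Cmod_sub_sym a b : Cmod (Cminus a b) = Cmod (Cminus b a).
Proof.
  replace (Cminus b a) with (Copp (Cminus a b)) by (apply injective_projections; simpl; ring).
  symmetry; apply Cmod_opp.
Qed.

Lemma Cmod_sub_triangle a b c : Cmod (Cminus a c) <= Cmod (Cminus a b) + Cmod (Cminus b c).
Proof.
  replace (Cminus a c) with (Cplus (Cminus a b) (Cminus b c))
    by (apply injective_projections; simpl; ring).
  apply Cmod_triangle.
Qed.

Lemma Cmod_sub_le a b : Cmod (Cminus a b) <= Cmod a + Cmod b.
Proof. unfold Cminus; rewrite <- (Cmod_opp b); apply Cmod_triangle. Qed.

Lemma Cmod_le_sub a b : Cmod a <= Cmod b + Cmod (Cminus a b).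
Proof.
  replace a with (Cplus b (Cminus a b)) at 1 by (apply injective_projections; simpl; ring).
  apply Cmod_triangle.
Qed.

Lemma Cminus_diag a : Cminus a a = RtoC 0.
Proof. apply injective_projections; simpl; ring. Qed.

Definition phase (u : C) : C :=
  if Req_EM_T (Cmod u) 0 then RtoC 1 else Cmult (RtoC (/ Cmod u)) u.

Definition radial (r : R) (u : C) : C := Cmult (RtoC r) (phase u).

Lemma Cmod_phase u : Cmod (phase u) = 1.
Proof.
  unfold phase; destruct (Req_EM_T (Cmod u) 0); [apply Cmod_1 |].
  pose proof (Cmod_ge_0 u).
  rewrite Cmod_mult, Cmod_R, Rabs_pos_eq; [field; assumption |].
  left; apply Rinv_0_lt_compat; lra.
Qed.

Lemma Cmod_radial r u : Cmod (radial r u) = Rabs r.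
Proof. unfold radial; rewrite Cmod_mult, Cmod_R, Cmod_phase; ring. Qed.

Lemma radial_Cmod u : radial (Cmod u) u = u.
Proof.
  unfold radial, phase; destruct (Req_EM_T (Cmod u) 0) as [E | E].
  - rewrite E; apply Cmod_eq_0 in E; subst; apply injective_projections; simpl; ring.
  - rewrite Cmult_assoc, <- RtoC_mult, Rinv_r by assumption.
    apply Cmult_1_l.
Qed.

Lemma Cmod_sub_radial r u : Cmod (Cminus u (radial r u)) = Rabs (Cmod u - r).
Proof.
  rewrite <- (radial_Cmod u) at 1; unfold radial.
  replace (Cminus _ _) with (Cmult (RtoC (Cmod u - r)) (phase u))
    by (apply injective_projections; simpl; ring).
  rewrite Cmod_mult, Cmod_R, Cmod_phase; ring.
Qed.

Definition Clim (u : nat -> C) : C :=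
  (real (Lim_seq (fun n => fst (u n))), real (Lim_seq (fun n => snd (u n)))).

Lemma Clim_correct (u : nat -> C) :
  (forall eps, 0 < eps -> exists N, forall n m, (N <= n)%nat -> (N <= m)%nat ->
     Cmod (Cminus (u n) (u m)) < eps) ->
  forall eps, 0 < eps -> eventually (fun n => Cmod (Cminus (u n) (Clim u)) < eps).
Proof.
  intros Hu.
  assert (Hcomp : forall pr : C -> R, (forall z, Rabs (pr z) <= Cmod z) ->
            (forall a b, pr (Cminus a b) = pr a - pr b) ->
            forall eps, 0 < eps ->
            eventually (fun n => Rabs (pr (u n) - real (Lim_seq (fun k => pr (u k)))) < eps)).
  { intros pr Hpr Hsub eps Heps.
    assert (Hlim : is_lim_seq (fun k => pr (u k)) (real (Lim_seq (fun k => pr (u k))))).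
    { apply Lim_seq_correct', ex_lim_seq_cauchy_corr; intros e.
      destruct (Hu e (cond_pos e)) as [N HN]; exists N; intros n m Hn Hm.
      rewrite <- Hsub; eapply Rle_lt_trans; [apply Hpr | apply HN; assumption]. }
    apply is_lim_seq_spec in Hlim; exact (Hlim (mkposreal eps Heps)). }
  assert (Hfst : forall z, Rabs (fst z) <= Cmod z)
    by (intros z; eapply Rle_trans; [apply Rmax_l | apply Rmax_Cmod]).
  assert (Hsnd : forall z, Rabs (snd z) <= Cmod z)
    by (intros z; eapply Rle_trans; [apply Rmax_r | apply Rmax_Cmod]).
  intros eps Heps.
  apply (filter_imp (fun n => Rabs (fst (u n) - fst (Clim u)) < eps / 2 /\
                              Rabs (snd (u n) - snd (Clim u)) < eps / 2)).
  - intros n [H1 H2].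
    set (z := Cminus (u n) (Clim u)).
    assert (Hz : Rmax (Rabs (fst z)) (Rabs (snd z)) < eps / 2)
      by (apply Rmax_lub_lt; assumption).
    assert (Hsqrt2 : sqrt 2 < 2) by (pose proof (sqrt_sqrt 2); pose proof (sqrt_pos 2); nra).
    pose proof (Cmod_2Rmax z); pose proof (Rle_trans _ _ _ (Rabs_pos (fst z)) (Rmax_l _ (Rabs (snd z)))).
    nra.
  - apply filter_and; [apply (Hcomp fst) | apply (Hcomp snd)];
      try assumption; try (intros; reflexivity); lra.
Qed.

Definition dominates {K : Type} (h : K -> R) (f : K -> C) : Prop := forall x, h x <= Cmod (f x).

Definition raise1 (r : R) (u : C) : C := if Rle_dec r (Cmod u) then u else radial r u.

Definition raise {K : Type} (h : K -> R) (y : K -> C) : K -> C := fun x => raise1 (h x) (y x).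

Definition inflate {K : Type} (c : K -> C) (W : K -> R) : K -> C :=
  fun x => radial (Cmod (c x) + W x) (c x).

Lemma raise_dominates {K : Type} (h : K -> R) (y : K -> C) :
  (forall x, 0 <= h x) -> dominates h (raise h y).
Proof.
  intros Hh x; unfold raise, raise1; destruct (Rle_dec (h x) (Cmod (y x))); [assumption |].
  rewrite Cmod_radial, Rabs_pos_eq; [lra | apply Hh].
Qed.

Lemma Cmod_sub_raise1 k delta r w (a y : C) : 0 <= k -> 0 <= w ->
  delta <= w \/ r <= k * w -> r + w <= Cmod a -> Cmod (Cminus a y) < delta ->
  Cmod (Cminus y (raise1 r y)) <= k * Cmod (Cminus a y).
Proof.
  intros Hk Hw Hcase Ha Hay; pose proof (Cmod_ge_0 (Cminus a y)) as Hay0.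
  unfold raise1; destruct (Rle_dec r (Cmod y)) as [Hry | Hry].
  - rewrite Cminus_diag, Cmod_0; nra.
  - rewrite Cmod_sub_radial, Rabs_left1 by lra.
    pose proof (Cmod_le_sub a y); pose proof (Cmod_ge_0 y).
    destruct (Rle_lt_dec (Cmod (Cminus a y)) w); [nra |].
    destruct Hcase; nra.
Qed.

Lemma Cmod_inflate {K : Type} (c : K -> C) (W : K -> R) x :
  0 <= W x -> Cmod (inflate c W x) = Cmod (c x) + W x.
Proof.
  intros HW; unfold inflate; rewrite Cmod_radial; apply Rabs_pos_eq.
  pose proof (Cmod_ge_0 (c x)); lra.
Qed.

Lemma Cmod_sub_inflate {K : Type} (c : K -> C) (W : K -> R) x :
  0 <= W x -> Cmod (Cminus (c x) (inflate c W x)) = W x.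
Proof.
  intros HW; unfold inflate; rewrite Cmod_sub_radial, Rabs_left1; lra.
Qed.

Lemma dependent_choice_seq {T : Type} (P : T -> Prop) (Rel : nat -> T -> T -> Prop) (s0 : T) :
  P s0 -> (forall n s, P s -> exists s', P s' /\ Rel n s s') ->
  exists u : nat -> T, u 0%nat = s0 /\ forall n, P (u n) /\ Rel n (u n) (u (S n)).
Proof.
  intros H0 Hstep.
  destruct (choice (fun (ns : nat * T) s' => P (snd ns) -> P s' /\ Rel (fst ns) (snd ns) s'))
    as [next Hnext].
  { intros [n s]; destruct (classic (P s)) as [Hs | Hs];
      [destruct (Hstep n s Hs) as [s' Hs']; exists s' | exists s]; simpl; tauto. }
  set (u := fix u n := match n with O => s0 | S n => next (n, u n) end).
  assert (Hu : forall n, P (u n)).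
  { induction n as [| n IH]; [exact H0 | apply (Hnext (n, u n) IH)]. }
  exists u; split; [reflexivity |].
  intros n; split; [apply Hu | apply (Hnext (n, u n) (Hu n))].
Qed.

Record stage (K : Type) : Type := Stage { lower : K -> R; center : K -> C; radius : R }.
Arguments Stage {K}.
Arguments lower {K}.
Arguments center {K}.
Arguments radius {K}.

Section WeightedLp.
Context {K : Type} (mu : K -> R) (p : R).
Hypothesis mu_ge1 : forall x, 1 <= mu x.
Hypothesis hp : 1 <= p.

Local Notation Lp := (in_Lp mu p).
Local Notation Q := (rpow 2 p).

Definition psum (f : K -> C) (s : list K) : R := lsum (fun x => rpow (Cmod (f x)) p * mu x) s.

(* The p-th power of the L^p distance: only a quasi-metric, but it avoids Minkowski's inequality. *)
Definition pdist (f g : K -> C) : R := lp_sum mu p (fun x => Cminus (f x) (g x)).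

Lemma lp_dist_pdist f g : lp_dist mu p f g = rpow (pdist f g) (/ p).
Proof. reflexivity. Qed.

Lemma lp_sum_spec f : Lp f ->
  (forall s, NoDup s -> psum f s <= lp_sum mu p f) /\
  (forall M, (forall s, NoDup s -> psum f s <= M) -> lp_sum mu p f <= M).
Proof.
  intros [M HM]; unfold lp_sum.
  destruct (Lub_Rbar_correct (lp_partial mu p f)) as [Hub Hlub].
  assert (Hge : Rbar_le 0 (Lub_Rbar (lp_partial mu p f)))
    by (apply Hub; exists nil; split; [constructor | reflexivity]).
  assert (Hle : Rbar_le (Lub_Rbar (lp_partial mu p f)) M)
    by (apply Hlub; intros r Hr; apply HM, Hr).
  destruct (Lub_Rbar (lp_partial mu p f)) as [l | |]; simpl in Hge, Hle; try contradiction.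
  split.
  - intros s Hs; apply (Hub (psum f s)); exists s; split; [assumption | reflexivity].
  - intros M' HM'; apply (Hlub M'); intros r [s [Hs ->]]; apply HM', Hs.
Qed.

Lemma psum_le_lp_sum f s : Lp f -> NoDup s -> psum f s <= lp_sum mu p f.
Proof. intros Hf; apply (lp_sum_spec f Hf). Qed.

Lemma lp_sum_ge0 f : Lp f -> 0 <= lp_sum mu p f.
Proof.
  intros Hf; apply (Rle_trans _ (psum f nil)); [unfold psum; simpl; lra |].
  apply psum_le_lp_sum; [assumption | constructor].
Qed.

Lemma lp_sum_le_bound f M : (forall s, NoDup s -> psum f s <= M) -> Lp f /\ lp_sum mu p f <= M.
Proof.
  intros HM.
  assert (Hf : Lp f) by (exists M; intros r [s [Hs ->]]; apply HM, Hs).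
  split; [assumption | apply (lp_sum_spec f Hf), HM].
Qed.

Lemma lp_sum_approx f eps : Lp f -> 0 < eps -> exists s, NoDup s /\ lp_sum mu p f - eps < psum f s.
Proof.
  intros Hf Heps; apply NNPP; intros Hnone.
  assert (lp_sum mu p f <= lp_sum mu p f - eps); [| lra].
  apply (lp_sum_spec f Hf); intros s Hs.
  apply Rnot_lt_le; intros Hlt; apply Hnone; exists s; split; assumption.
Qed.

Lemma rpow_Cmod_le_lp_sum f x : Lp f -> rpow (Cmod (f x)) p <= lp_sum mu p f.
Proof.
  intros Hf; apply (Rle_trans _ (psum f (x :: nil))).
  - unfold psum; simpl.
    pose proof (mu_ge1 x); pose proof (rpow_ge0 (Cmod (f x)) p); nra.
  - apply psum_le_lp_sum; [assumption | repeat constructor; simpl; tauto].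
Qed.

Lemma lp_sum_le_dominated f g1 g2 c : 0 <= c -> Lp g1 -> Lp g2 ->
  (forall x, rpow (Cmod (f x)) p <= c * (rpow (Cmod (g1 x)) p + rpow (Cmod (g2 x)) p)) ->
  Lp f /\ lp_sum mu p f <= c * (lp_sum mu p g1 + lp_sum mu p g2).
Proof.
  intros Hc H1 H2 Hfg; apply lp_sum_le_bound; intros s Hs.
  apply (Rle_trans _ (c * (psum g1 s + psum g2 s))).
  - unfold psum; rewrite <- lsum_plus, <- lsum_scal; apply lsum_le; intros x _.
    pose proof (mu_ge1 x); specialize (Hfg x); nra.
  - pose proof (psum_le_lp_sum g1 s H1 Hs); pose proof (psum_le_lp_sum g2 s H2 Hs); nra.
Qed.

Lemma lp_sum_le_scal f g c : 0 <= c -> Lp g ->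
  (forall x, rpow (Cmod (f x)) p <= c * rpow (Cmod (g x)) p) ->
  Lp f /\ lp_sum mu p f <= c * lp_sum mu p g.
Proof.
  intros Hc Hg Hfg; apply lp_sum_le_bound; intros s Hs.
  apply (Rle_trans _ (c * psum g s)).
  - unfold psum; rewrite <- lsum_scal; apply lsum_le; intros x _.
    pose proof (mu_ge1 x); specialize (Hfg x); nra.
  - pose proof (psum_le_lp_sum g s Hg Hs); nra.
Qed.

Lemma in_Lp_sub f g : Lp f -> Lp g -> Lp (fun x => Cminus (f x) (g x)).
Proof.
  intros Hf Hg; apply (lp_sum_le_dominated _ f g Q); [pose proof (rpow_2_ge1 p hp); lra | assumption.. |].
  intros x; eapply Rle_trans; [apply rpow_le_compat; [lra | split; [apply Cmod_ge_0 | apply Cmod_sub_le]] |].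
  apply rpow_add_le; [assumption | apply Cmod_ge_0 ..].
Qed.

Lemma in_Lp_of_sub f g : Lp f -> Lp (fun x => Cminus (f x) (g x)) -> Lp g.
Proof.
  intros Hf Hfg; apply (lp_sum_le_dominated _ f (fun x => Cminus (f x) (g x)) Q); [pose proof (rpow_2_ge1 p hp); lra | assumption.. |].
  intros x; apply (Rle_trans _ (rpow (Cmod (f x) + Cmod (Cminus (f x) (g x))) p)).
  - apply rpow_le_compat; [lra | split; [apply Cmod_ge_0 |]].
    rewrite (Cmod_sub_sym (f x)); apply Cmod_le_sub.
  - apply rpow_add_le; [assumption | apply Cmod_ge_0 ..].
Qed.

Lemma pdist_ge0 f g : Lp f -> Lp g -> 0 <= pdist f g.
Proof. intros Hf Hg; apply lp_sum_ge0, in_Lp_sub; assumption. Qed.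

Lemma pdist_triangle f g k : Lp f -> Lp g -> Lp k -> pdist f k <= Q * (pdist f g + pdist g k).
Proof.
  intros Hf Hg Hk; apply lp_sum_le_dominated;
    [pose proof (rpow_2_ge1 p hp); lra | apply in_Lp_sub; assumption .. |].
  intros x; eapply Rle_trans;
    [apply rpow_le_compat; [lra | split; [apply Cmod_ge_0 | apply Cmod_sub_triangle]] |].
  apply rpow_add_le; [assumption | apply Cmod_ge_0 ..].
Qed.

Lemma pdist_diag f : pdist f f = 0.
Proof.
  assert (H0 : forall s, NoDup s -> psum (fun x => Cminus (f x) (f x)) s <= 0).
  { intros s _; apply (Rle_trans _ (lsum (fun _ => 0) s)).
    - apply lsum_le; intros x _; rewrite Cminus_diag, Cmod_0, rpow_0_l; lra.
    - induction s; simpl; lra. }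
  destruct (lp_sum_le_bound _ 0 H0) as [HL HN].
  pose proof (lp_sum_ge0 _ HL); unfold pdist; lra.
Qed.

Lemma rpow_Cmod_sub_le_pdist f g x : Lp f -> Lp g ->
  rpow (Cmod (Cminus (f x) (g x))) p <= pdist f g.
Proof. intros Hf Hg; apply (rpow_Cmod_le_lp_sum (fun x => Cminus (f x) (g x))), in_Lp_sub; assumption. Qed.

Lemma Cmod_sub_lt_of_pdist f g delta x : Lp f -> Lp g -> 0 <= delta ->
  pdist f g < rpow delta p -> Cmod (Cminus (f x) (g x)) < delta.
Proof.
  intros Hf Hg Hd Hfg; apply (rpow_lt_reg _ _ p); [lra | apply Cmod_ge_0 | assumption |].
  eapply Rle_lt_trans; [apply rpow_Cmod_sub_le_pdist |]; assumption.
Qed.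

Lemma pdist_gt0 f g : Lp f -> Lp g -> f <> g -> 0 < pdist f g.
Proof.
  intros Hf Hg Hfg.
  destruct (classic (exists x, f x <> g x)) as [[x Hx] | Hnone].
  - eapply Rlt_le_trans; [| apply (rpow_Cmod_sub_le_pdist f g x Hf Hg)].
    apply rpow_gt0, Cmod_gt_0; intros E; apply Hx.
    replace (f x) with (Cplus (Cminus (f x) (g x)) (g x))
      by (apply injective_projections; simpl; ring).
    rewrite E; apply injective_projections; simpl; ring.
  - exfalso; apply Hfg; apply functional_extensionality; intros x.
    apply NNPP; intros Hx; apply Hnone; exists x; assumption.
Qed.

Lemma pdist_ball_incl c c' rho rho' : 0 < rho -> Lp c -> Lp c' ->
  pdist c c' <= rho / (2 * Q) -> rho' <= rho / (2 * Q) ->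
  forall w, Lp w -> pdist c' w <= rho' -> pdist c w <= rho.
Proof.
  intros Hrho Hc Hc' Hcc' Hrho' w Hw Hc'w; pose proof (rpow_2_ge1 p hp).
  eapply Rle_trans; [apply (pdist_triangle c c' w); assumption |].
  apply (Rle_trans _ (Q * (rho / (2 * Q) + rho / (2 * Q)))); [apply Rmult_le_compat_l; lra |].
  right; field; lra.
Qed.


Lemma raise_close k delta h W a y : 0 <= k -> 0 < delta -> (forall x, 0 <= W x) ->
  (forall x, delta <= W x \/ h x <= k * W x) ->
  Lp a -> dominates (fun x => h x + W x) a -> Lp y -> pdist a y < rpow delta p ->
  Lp (raise h y) /\ pdist y (raise h y) <= rpow k p * pdist a y.
Proof.
  intros Hk Hdelta HW Hcase Ha Hdom Hy Hay.
  assert (Hpt : forall x, Cmod (Cminus (y x) (raise h y x)) <= k * Cmod (Cminus (a x) (y x))).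
  { intros x; apply (Cmod_sub_raise1 k delta (h x) (W x)); try apply Hdom; auto.
    apply Cmod_sub_lt_of_pdist; auto; lra. }
  destruct (lp_sum_le_scal (fun x => Cminus (y x) (raise h y x)) (fun x => Cminus (a x) (y x))
              (rpow k p)) as [HL HN].
  - apply rpow_ge0.
  - apply in_Lp_sub; assumption.
  - intros x; rewrite <- rpow_mult_distr by (apply Cmod_ge_0 || assumption).
    apply rpow_le_compat; [lra | split; [apply Cmod_ge_0 | apply Hpt]].
  - split; [apply (in_Lp_of_sub y) |]; assumption.
Qed.

Lemma lp_sum_le_split f c s delta k : 0 < k -> 0 <= delta -> Lp c -> NoDup s ->
  (forall x, In x s -> Cmod (f x) <= delta) ->
  (forall x, ~ In x s -> k * Cmod (f x) <= Cmod (c x)) ->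
  Lp f /\ lp_sum mu p f <= rpow delta p * lsum mu s + (lp_sum mu p c - psum c s) / rpow k p.
Proof.
  intros Hk Hdelta Hc Hs Hin Hout.
  assert (Hkp : 0 < / rpow k p) by apply Rinv_0_lt_compat, rpow_gt0, Hk.
  apply lp_sum_le_bound; intros t Ht.
  set (f_in x := if inb s x then rpow delta p * mu x else 0).
  set (c_out x := if inb s x then 0 else rpow (Cmod (c x)) p * mu x).
  apply (Rle_trans _ (lsum f_in t + / rpow k p * lsum c_out t)).
  - unfold psum; rewrite <- lsum_scal, <- lsum_plus; apply lsum_le; intros x _.
    pose proof (mu_ge1 x) as Hmu; unfold f_in, c_out; destruct (inb s x) eqn:Hx.
    + assert (rpow (Cmod (f x)) p <= rpow delta p)
        by (apply rpow_le_compat; [lra | split; [apply Cmod_ge_0 | apply Hin, inb_true, Hx]]).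
      nra.
    + assert (Hfc : Cmod (f x) <= Cmod (c x) * / k).
      { assert (Hnot : ~ In x s) by (rewrite <- inb_true, Hx; discriminate).
        pose proof (Hout x Hnot); apply (Rmult_le_reg_l k); [lra |].
        replace (k * (Cmod (c x) * / k)) with (Cmod (c x)) by (field; lra); assumption. }
      assert (rpow (Cmod (f x)) p <= rpow (Cmod (c x)) p * / rpow k p).
      { pose proof (Rinv_0_lt_compat k Hk).
        rewrite <- (rpow_inv_base k p Hk), <- rpow_mult_distr by (apply Cmod_ge_0 || lra).
        apply rpow_le_compat; [lra | split; [apply Cmod_ge_0 | assumption]]. }
      nra.
  - assert (Hs_in : lsum f_in t <= rpow delta p * lsum mu s).
    { rewrite <- lsum_scal; apply lsum_inb_le; [| assumption].
      intros x; pose proof (mu_ge1 x); pose proof (rpow_ge0 delta p); nra. }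
    destruct (lsum_notinb_app (fun x => rpow (Cmod (c x)) p * mu x) s t Hs Ht) as [u [Hu Hsum]].
    pose proof (psum_le_lp_sum c u Hc Hu); unfold psum in *; fold c_out in Hsum.
    unfold Rdiv; nra.
Qed.

Lemma inflate_close k h c beta : 0 < k -> (forall x, 0 <= h x) ->
  Lp c -> dominates h c -> 0 < beta ->
  exists W delta, 0 < delta /\ (forall x, 0 <= W x) /\ (forall x, delta <= W x \/ h x <= k * W x) /\
    Lp (inflate c W) /\ pdist c (inflate c W) <= beta.
Proof.
  intros Hk Hh Hc Hdom Hbeta; pose proof (rpow_gt0 k p Hk) as Hkp.
  destruct (lp_sum_approx c (rpow k p * beta / 2) Hc) as [s [Hs Happrox]]; [nra |].
  set (S := lsum mu s).
  assert (HS : 0 <= S) by (apply lsum_ge0; intros x; pose proof (mu_ge1 x); lra).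
  set (delta := Rmin 1 (beta / 2 / (1 + S))).
  assert (Hdelta : 0 < delta) by (apply Rmin_glb_lt; [lra | apply Rdiv_lt_0_compat; lra]).
  assert (HdeltaS : rpow delta p * S <= beta / 2).
  { assert (rpow delta p <= delta) by (apply rpow_le_self; [| split; [| apply Rmin_l]]; lra).
    assert (delta * (1 + S) <= beta / 2); [| pose proof (rpow_ge0 delta p); nra].
    apply (Rle_trans _ (beta / 2 / (1 + S) * (1 + S))); [apply Rmult_le_compat_r, Rmin_r; lra |].
    right; field; lra. }
  set (W x := if inb s x then delta else h x / k).
  assert (HW : forall x, 0 <= W x)
    by (intros x; unfold W; destruct (inb s x); [lra | apply Rdiv_le_0_compat; [apply Hh | lra]]).
  destruct (lp_sum_le_split (fun x => Cminus (c x) (inflate c W x)) c s delta k)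
    as [Hdiff Hbound]; try assumption; try lra.
  - intros x Hx; rewrite Cmod_sub_inflate by apply HW.
    unfold W; rewrite (proj2 (inb_true s x) Hx); lra.
  - intros x Hx; rewrite Cmod_sub_inflate by apply HW.
    unfold W; destruct (inb s x) eqn:E; [apply inb_true in E; contradiction |].
    replace (k * (h x / k)) with (h x) by (field; lra); apply Hdom.
  - exists W, delta; repeat split; [assumption .. | | |].
    + intros x; unfold W; destruct (inb s x); [left; lra | right; right; field; lra].
    + apply (in_Lp_of_sub c); assumption.
    + assert (Htail : (lp_sum mu p c - psum c s) / rpow k p <= beta / 2).
      { apply (Rmult_le_reg_r (rpow k p)); [assumption |].
        unfold Rdiv; rewrite Rmult_assoc, Rinv_l; lra. }
      unfold pdist; fold S in Hbound; lra.
Qed.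

Definition admissible (st : stage K) : Prop :=
  (forall x, 0 <= lower st x) /\ Lp (center st) /\ dominates (lower st) (center st) /\ 0 < radius st.

(* The factor [Q] leaves room for the limit of the centres, which is only known to lie within
   [Q * radius] of each centre. *)
Definition refines (A : (K -> C) -> Prop) (st st' : stage K) : Prop :=
  (forall x, lower st x <= lower st' x) /\ radius st' <= radius st / 2 /\
  (forall w, Lp w -> pdist (center st') w <= radius st' -> pdist (center st) w <= radius st) /\
  (forall w, Lp w -> dominates (lower st') w -> pdist (center st') w <= Q * radius st' -> ~ A w).

Lemma refines_intro A h c rho h' c' rho' : 0 < rho -> Lp c -> Lp c' ->
  pdist c c' <= rho / (2 * Q) -> 0 < rho' <= rho / (2 * Q) -> (forall x, h x <= h' x) ->
  (forall w, Lp w -> dominates h' w -> pdist c' w <= Q * rho' -> ~ A w) ->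
  refines A (Stage h c rho) (Stage h' c' rho').
Proof.
  intros Hrho Hc Hc' Hcc' Hrho' Hhh' Havoid; pose proof (rpow_2_ge1 p hp).
  assert (rho / (2 * Q) <= rho / 2)
    by (apply Rmult_le_compat_l; [lra | apply Rinv_le_contravar; lra]).
  repeat split; simpl; try assumption; [lra |].
  apply (pdist_ball_incl c c'); tauto.
Qed.

Section Refinement.
Variable lam : R.
Hypothesis hlam : 0 < lam < 1.

Definition kap : R := rpow (rpow lam p / (4 * Q)) (/ p).

Lemma kap_facts : 0 < kap /\ Q * rpow kap p = rpow lam p / 4 /\ rpow kap p <= 1.
Proof.
  pose proof (rpow_2_ge1 p hp) as HQ.
  pose proof (rpow_gt0 lam p (proj1 hlam)) as HLam0.
  pose proof (rpow_le_self lam p hp (conj (Rlt_le _ _ (proj1 hlam)) (Rlt_le _ _ (proj2 hlam)))).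
  assert (Hpos : 0 < rpow lam p / (4 * Q)) by (apply Rdiv_lt_0_compat; lra).
  unfold kap; rewrite rpow_inv_rpow by lra; repeat split.
  - apply rpow_gt0, Hpos.
  - field; lra.
  - apply (Rle_trans _ (rpow lam p / 1)); [apply Rmult_le_compat_l; [lra |] | lra].
    apply Rinv_le_contravar; lra.
Qed.

Lemma hole_near (A : (K -> C) -> Prop) h W delta a eps bound :
  porous Lp (lp_dist mu p) lam A -> 0 < delta -> (forall x, 0 <= h x) -> (forall x, 0 <= W x) ->
  (forall x, delta <= W x \/ h x <= kap * W x) ->
  A a -> Lp a -> dominates (fun x => h x + W x) a -> 0 < eps -> 0 < bound ->
  exists z rho, 0 < rho <= bound /\ Lp z /\ dominates h z /\ pdist a z <= eps /\
    (forall w, Lp w -> pdist z w <= Q * rho -> ~ A w).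
Proof.
  intros [_ Hporous] Hdelta Hh HW Hcase HAa Ha Hdom Heps Hbound.
  pose proof (rpow_2_ge1 p hp) as HQ; destruct kap_facts as [Hkap [HQkap Hkap1]].
  pose proof (rpow_gt0 lam p (proj1 hlam)) as HLam.
  set (tau := Rmin (eps / (2 * Q)) (rpow delta p)).
  assert (Htau : 0 < tau) by (apply Rmin_glb_lt; [apply Rdiv_lt_0_compat | apply rpow_gt0]; lra).
  destruct (Hporous a HAa (rpow tau (/ p))) as [y [Hy [Hya [Hay Hhole]]]];
    [apply rpow_gt0, Htau |].
  rewrite lp_dist_pdist in Hay.
  assert (Hay0 : 0 < pdist a y) by (apply pdist_gt0; auto).
  assert (Hay_tau : pdist a y < tau).
  { apply (rpow_lt_reg _ _ (/ p)); [apply Rinv_0_lt_compat; lra | lra | lra | assumption]. }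
  destruct (raise_close kap delta h W a y) as [Hz Hyz]; try lra; try assumption.
  { apply (Rlt_le_trans _ tau); [assumption | apply Rmin_r]. }
  set (z := raise h y) in *.
  assert (Hyz' : pdist y z <= pdist a y) by nra.
  set (rho := Rmin bound (rpow lam p * pdist a y / (4 * Q * Q))).
  assert (Hrho : 0 < rho) by (apply Rmin_glb_lt; [| apply Rdiv_lt_0_compat]; nra).
  exists z, rho; repeat split; [lra | apply Rmin_l | assumption | apply raise_dominates, Hh | |].
  - eapply Rle_trans; [apply (pdist_triangle a y z); assumption |].
    assert (tau <= eps / (2 * Q)) by apply Rmin_l.
    apply (Rle_trans _ (Q * (2 * (eps / (2 * Q))))); [nra | right; field; lra].
  - intros w Hw Hzw HAw; apply (Hhole w Hw); [| assumption].
    rewrite !lp_dist_pdist.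
    assert (Hyw : pdist y w < rpow lam p * pdist a y).
    { eapply Rle_lt_trans; [apply (pdist_triangle y z w); assumption |].
      assert (rho <= rpow lam p * pdist a y / (4 * Q * Q)) by apply Rmin_r.
      assert (Q * rho * Q <= rpow lam p * pdist a y / 4)
        by (apply (Rle_trans _ (rpow lam p * pdist a y / (4 * Q * Q) * Q * Q)); [nra | right; field; lra]).
      nra. }
    rewrite <- (rpow_rpow_inv lam p) at 1 by lra.
    rewrite <- rpow_mult_distr by (apply rpow_ge0 || lra).
    apply rpow_lt_compat; [apply Rinv_0_lt_compat; lra | split; [apply pdist_ge0 |]; assumption].
Qed.

Lemma refines_exists A st : porous Lp (lp_dist mu p) lam A -> admissible st ->
  exists st', admissible st' /\ refines A st st'.
Proof.
  destruct st as [h c rho]; intros HA [Hh [Hc [Hdom Hrho]]]; simpl in *.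
  pose proof (rpow_2_ge1 p hp) as HQ; destruct kap_facts as [Hkap _].
  set (beta := rho / (6 * Q * Q)); set (sigma := rho / (6 * Q * Q * Q)).
  assert (Hbeta : 0 < beta) by (apply Rdiv_lt_0_compat; nra).
  assert (Hsigma : 0 < sigma) by (apply Rdiv_lt_0_compat; repeat apply Rmult_lt_0_compat; lra).
  assert (Hbeta2 : beta <= rho / (2 * Q)).
  { unfold beta; apply Rmult_le_compat_l; [lra | apply Rinv_le_contravar; nra]. }
  destruct (inflate_close kap h c beta) as [W [delta [Hdelta [HW [Hcase [Hc' Hcc']]]]]]; try assumption.
  set (c' := inflate c W) in *.
  assert (Hdom' : dominates (fun x => h x + W x) c')
    by (intros x; unfold c'; rewrite Cmod_inflate by apply HW; pose proof (Hdom x); lra).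
  destruct (classic (exists a, A a /\ Lp a /\ dominates (fun x => h x + W x) a /\ pdist c' a <= sigma))
    as [[a [HAa [Ha [Hdoma Hc'a]]]] | Hnone].
  - destruct (hole_near A h W delta a sigma (rho / (2 * Q)))
      as [z [rho' [Hrho' [Hz [Hdomz [Haz Hhole]]]]]];
      try assumption; [apply Rdiv_lt_0_compat; lra |].
    exists (Stage h z rho'); split; [repeat split; simpl; tauto |].
    apply refines_intro; try assumption; [| intros x; lra | intros w Hw _; apply Hhole, Hw].
    assert (Hc'z : pdist c' z <= Q * (2 * sigma))
      by (eapply Rle_trans; [apply (pdist_triangle c' a z); assumption | nra]).
    eapply Rle_trans; [apply (pdist_triangle c c' z); assumption |].
    apply (Rle_trans _ (Q * (beta + Q * (2 * sigma)))); [nra |].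
    right; unfold beta, sigma; field; lra.
  - exists (Stage (fun x => h x + W x) c' (sigma / Q)).
    split.
    { repeat split; simpl; try assumption.
      - intros x; pose proof (Hh x); pose proof (HW x); lra.
      - apply Rdiv_lt_0_compat; lra. }
    apply refines_intro; try assumption; [lra | split | intros x; pose proof (HW x); lra |].
    + apply Rdiv_lt_0_compat; lra.
    + apply (Rle_trans _ beta); [| assumption].
      replace (sigma / Q) with (beta * / (Q * Q)) by (unfold sigma, beta; field; lra).
      assert (/ (Q * Q) <= 1) by (rewrite <- Rinv_1; apply Rinv_le_contravar; nra); nra.
    + intros w Hw Hdomw Hc'w HAw; apply Hnone; exists w; repeat split; try assumption.
      replace sigma with (Q * (sigma / Q)) by (field; lra); assumption.
Qed.

End Refinement.

Section Limit.
Variable c : nat -> K -> C.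
Variable r : nat -> R.
Hypothesis Lp_c : forall k, Lp (c k).
Hypothesis pdist_c : forall k j, (k <= j)%nat -> pdist (c k) (c j) <= r k.
Hypothesis r_small : forall eps, 0 < eps -> exists k, r k < eps.

Definition limit : K -> C := fun x => Clim (fun k => c k x).

Lemma limit_pointwise x eps : 0 < eps ->
  eventually (fun n => Cmod (Cminus (c n x) (limit x)) < eps).
Proof.
  apply Clim_correct; intros e He.
  destruct (r_small (rpow (e / 2) p)) as [k Hk]; [apply rpow_gt0; lra |].
  exists k; intros n m Hn Hm; cbv beta.
  assert (Hclose : forall j, (k <= j)%nat -> Cmod (Cminus (c k x) (c j x)) < e / 2).
  { intros j Hj; apply (Cmod_sub_lt_of_pdist (c k) (c j) (e / 2)); auto; [lra |].
    eapply Rle_lt_trans; [apply pdist_c |]; eassumption. }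
  pose proof (Cmod_sub_triangle (c n x) (c k x) (c m x)) as Htri.
  rewrite (Cmod_sub_sym (c n x) (c k x)) in Htri.
  pose proof (Hclose n Hn); pose proof (Hclose m Hm); lra.
Qed.

Lemma limit_dominates h k : (forall j, (k <= j)%nat -> dominates h (c j)) -> dominates h limit.
Proof.
  intros Hdom x; apply Rnot_lt_le; intros Hlt.
  destruct (limit_pointwise x (h x - Cmod (limit x))) as [N HN]; [lra |].
  specialize (HN (Nat.max N k) (Nat.le_max_l _ _)).
  pose proof (Hdom (Nat.max N k) (Nat.le_max_r _ _) x).
  pose proof (Cmod_le_sub (c (Nat.max N k) x) (limit x)); lra.
Qed.

Lemma limit_close k : Lp (fun x => Cminus (c k x) (limit x)) /\ pdist (c k) limit <= Q * r k.
Proof.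
  pose proof (rpow_2_ge1 p hp) as HQ.
  apply lp_sum_le_bound; intros t Ht; apply Rle_plus_epsilon; intros eta Heta.
  set (S := lsum mu t).
  assert (HS : 0 <= S) by (apply lsum_ge0; intros x; pose proof (mu_ge1 x); lra).
  set (e := Rmin 1 (eta / (Q * (1 + S)))).
  assert (He : 0 < e) by (apply Rmin_glb_lt; [| apply Rdiv_lt_0_compat]; nra).
  assert (HeS : Q * (e * S) <= eta).
  { assert (e <= eta / (Q * (1 + S))) by apply Rmin_r.
    assert (0 <= eta / (Q * (1 + S))) by (apply Rlt_le, Rdiv_lt_0_compat; nra).
    apply (Rle_trans _ (Q * (eta / (Q * (1 + S)) * (1 + S)))); [apply Rmult_le_compat_l; nra |].
    right; field; lra. }
  destruct (eventually_forall_in (fun x n => Cmod (Cminus (c n x) (limit x)) < e) t)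
    as [N HN]; [intros x _; apply limit_pointwise, He |].
  set (n := Nat.max N k).
  assert (Hkn : psum (fun x => Cminus (c k x) (c n x)) t <= r k).
  { eapply Rle_trans; [apply psum_le_lp_sum; [apply in_Lp_sub |] |]; auto.
    apply pdist_c, Nat.le_max_r. }
  assert (Hnl : psum (fun x => Cminus (c n x) (limit x)) t <= e * S).
  { unfold psum, S; rewrite <- lsum_scal; apply lsum_le; intros x Hx.
    pose proof (mu_ge1 x); apply Rmult_le_compat_r; [lra |].
    apply (Rle_trans _ (rpow e p)); [apply rpow_le_compat; [lra |] | apply rpow_le_self; [| split; [| apply Rmin_l]]; lra].
    split; [apply Cmod_ge_0 | left; apply HN; [apply Nat.le_max_l | assumption]]. }
  apply (Rle_trans _ (Q * (psum (fun x => Cminus (c k x) (c n x)) t +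
                           psum (fun x => Cminus (c n x) (limit x)) t))); [| nra].
  unfold psum; rewrite <- lsum_plus, <- lsum_scal; apply lsum_le; intros x _.
  pose proof (mu_ge1 x).
  assert (rpow (Cmod (Cminus (c k x) (limit x))) p <=
          Q * (rpow (Cmod (Cminus (c k x) (c n x))) p + rpow (Cmod (Cminus (c n x) (limit x))) p)).
  { eapply Rle_trans; [apply rpow_le_compat; [lra | split; [apply Cmod_ge_0 | apply Cmod_sub_triangle]] |].
    apply rpow_add_le; [assumption | apply Cmod_ge_0 ..]. }
  nra.
Qed.

Lemma in_Lp_limit : Lp limit.
Proof. apply (in_Lp_of_sub (c 0)); [apply Lp_c | apply limit_close]. Qed.

End Limit.

Section Chain.
Variable A : nat -> (K -> C) -> Prop.
Variable u : nat -> stage K.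
Hypothesis Hu : forall n, admissible (u n) /\ refines (A n) (u n) (u (S n)).

Lemma radius_le_pow k : radius (u k) <= radius (u 0%nat) * (/ 2) ^ k.
Proof.
  induction k as [| k IH]; simpl; [lra |].
  destruct (Hu k) as [_ [_ [Hr _]]]; lra.
Qed.

Lemma radius_vanishes eps : 0 < eps -> exists k, radius (u k) < eps.
Proof.
  intros Heps; destruct (Hu 0%nat) as [[_ [_ [_ Hr0]]] _].
  destruct (pow_lt_1_zero (/ 2) ltac:(rewrite Rabs_pos_eq; lra) (eps / radius (u 0%nat)))
    as [k Hk]; [apply Rdiv_lt_0_compat; assumption |].
  exists k; specialize (Hk k (le_n k)); rewrite Rabs_pos_eq in Hk by (apply pow_le; lra).
  eapply Rle_lt_trans; [apply radius_le_pow |].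
  apply (Rmult_lt_compat_l (radius (u 0%nat))) in Hk; [| assumption].
  replace (radius (u 0%nat) * (eps / radius (u 0%nat))) with eps in Hk by (field; lra); assumption.
Qed.

Lemma lower_mono k j x : (k <= j)%nat -> lower (u k) x <= lower (u j) x.
Proof.
  induction 1 as [| j _ IH]; [lra |].
  destruct (Hu j) as [_ [Hl _]]; specialize (Hl x); lra.
Qed.

Lemma center_pdist_le k j : (k <= j)%nat -> pdist (center (u k)) (center (u j)) <= radius (u k).
Proof.
  intros Hkj.
  assert (Hball : forall w, Lp w -> pdist (center (u j)) w <= radius (u j) ->
                            pdist (center (u k)) w <= radius (u k)).
  { induction Hkj as [| j _ IH]; [tauto |].
    intros w Hw Hj; apply IH, (proj1 (proj2 (proj2 (proj2 (Hu j))))); assumption. }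
  destruct (Hu j) as [[_ [Hc [_ Hr]]] _].
  apply Hball; [assumption | rewrite pdist_diag; lra].
Qed.

End Chain.

Theorem dominating_set_not_sigma_porous g lam : Lp g -> 0 < lam < 1 ->
  ~ sigma_porous Lp (lp_dist mu p) lam (fun f => Lp f /\ forall x, Cmod (g x) <= Cmod (f x)).
Proof.
  intros Hg Hlam [E [HE Hcov]].
  destruct (dependent_choice_seq admissible (fun n => refines (E n))
              (Stage (fun x => Cmod (g x)) g 1)) as [u [Hu0 Hu]].
  { repeat split; simpl; try lra; try assumption; intros x; [apply Cmod_ge_0 | lra]. }
  { intros n st Hst; apply (refines_exists lam Hlam); [apply HE | assumption]. }
  set (c k := center (u k)); set (r k := radius (u k)).
  assert (Hc : forall k, Lp (c k)) by (intros k; apply (Hu k)).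
  pose proof (center_pdist_le E u Hu) as Hcr; pose proof (radius_vanishes E u Hu) as Hr.
  assert (Hdom : forall k, dominates (lower (u k)) (limit c)).
  { intros k; apply (limit_dominates c r Hc Hcr Hr) with k.
    intros j Hkj x; eapply Rle_trans; [apply (lower_mono E u Hu k j x Hkj) | apply (Hu j)]. }
  destruct (proj1 (Hcov (limit c))) as [n Hn].
  { split; [apply (in_Lp_limit c r Hc Hcr Hr) |].
    intros x; pose proof (Hdom 0%nat x) as Hg0; rewrite Hu0 in Hg0; exact Hg0. }
  destruct (Hu n) as [_ [_ [_ [_ Havoid]]]].
  apply (Havoid (limit c) (in_Lp_limit c r Hc Hcr Hr) (Hdom (S n))); [| assumption].
  apply (limit_close c r Hc Hcr Hr).
Qed.

End WeightedLp.

Lemma haar_ge1 {K : Type} (H : DiscreteHypergroup K) x : 1 <= haar H x.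
Proof.
  unfold haar; set (m := conv H x (hinv H x) (hid H)).
  assert (Hm0 : m <> 0) by (apply (conv_e_supp _ H); rewrite hinv_invol; reflexivity).
  pose proof (conv_ge0 _ H x (hinv H x) (hid H)) as Hm.
  destruct (conv_prob _ H x (hinv H x)) as [s [_ [Hsupp Hsum]]].
  assert (Hm1 : m <= 1).
  { rewrite <- Hsum; apply (Rle_trans _ (lsum (conv H x (hinv H x)) (hid H :: nil))).
    - simpl; unfold m; lra.
    - apply lsum_le_incl; [apply conv_ge0 | repeat constructor; simpl; tauto |].
      intros z [<- | []]; apply Hsupp; assumption. }
  rewrite <- Rinv_1; apply Rinv_le_contravar; fold m in Hm; lra.
Qed.

Theorem proposition3p10 (K : Type) (H : DiscreteHypergroup K) (p : R)
  (hp : 1 <= p) (g : K -> C) (hg : in_Lp (haar H) p g) :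
  forall lam : R, 0 < lam < 1 ->
    ~ sigma_porous (in_Lp (haar H) p) (lp_dist (haar H) p) lam
        (fun f => in_Lp (haar H) p f /\ forall x, Cmod (g x) <= Cmod (f x)).
Proof.
  intros lam Hlam; apply dominating_set_not_sigma_porous; auto using haar_ge1.
Qed.
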